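(* Let $p$ be a prime and let $L\in\mathbb{F}_p((X^{-1}))$ be irrational with continued fraction expansion $L=[A_0;A_1,A_2,\ldots]$ such that $K(L):=\sup_{d\ge1}\deg(A_d)<\infty$. Let $B\in\mathbb{F}_p[X]$ be nonzero with $\deg B=e$. Then the digital Kronecker sequence associated with $BL$ is a $(t,1)$-sequence in base $p$ with $t=K(L)+e-1$.
   Context: Elements of $\mathbb{F}_p$ are identified with $\{0,\ldots,p-1\}$. For $n=n_0+n_1p+\cdots$ in base $p$, $n(X)=n_0+n_1X+\cdots$. For $M=\sum_{i=w}^\infty a_iX^{-i}$, $\{M\}=\sum_{i\ge\max(1,w)}a_iX^{-i}$. The digital Kronecker sequence associated with $M$: writing $\{n(X)M\}=\sum_{i\ge1}c_iX^{-i}$, $x_n=\sum_{i\ge1}c_ip^{-i}$. Every irrational $L$ has a unique infinite continued fraction expansion $[A_0;A_1,\ldots]$ with $A_i\in\mathbb{F}_p[X]$, $\deg A_i\ge1$ for $i\ge1$. A $(t,m,1)$-net in base $p$ is a set of $p^m$ points in $[0,1)$ such that every interval $[a/p^{m-t},(a+1)/p^{m-t})$, $0\le a<p^{m-t}$, contains exactly $p^t$ points; a sequence $(x_n)_{n\ge0}$ in $[0,1)$ is a $(t,1)$-sequence in base $p$ if for all integers $m>t$ and $k\ge0$ the points $x_{kp^m},\ldots,x_{(k+1)p^m-1}$ form a $(t,m,1)$-net in base $p$. *)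

From Stdlib Require Import Reals ZArith.
From HB Require Import structures.
From mathcomp Require Import all_boot all_order all_algebra.
Set Implicit Arguments. Unset Strict Implicit. Unset Printing Implicit Defensive.
Import GRing.Theory.

(* A series
     M = sum_{i >= lw} a_i X^{-i}
   is represented by its lower index bound lw : Z and the coefficient
   sequence lc n = a_{lw+n}.  Representations are not unique; equality of
   series is extensional equality of [lcoef] (see [leqL]). *)
Record laurent (p : nat) := Laurent { lw : Z; lc : nat -> 'F_p }.

Section Laurent.
Variable p : nat.
Local Notation F := 'F_p.
Local Notation LS := (laurent p).

Definition lcoef (M : LS) (i : Z) : F :=
  if Z.leb (lw M) i then lc M (Z.to_nat (Z.sub i (lw M))) else 0%R.

Definition leqL (M N : LS) : Prop := forall i, lcoef M i = lcoef N i.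

(* series with lower bound w and coefficient function f (coefficients of
   X^{-i} for i < w are discarded, i.e. taken to be 0) *)
Definition laurent_of (w : Z) (f : Z -> F) : LS :=
  Laurent w (fun n => f (Z.add w (Z.of_nat n))).

Definition lone : LS := Laurent 0 (fun n => if n == 0%N then 1%R else 0%R).

Definition laddL (M N : LS) : LS :=
  laurent_of (Z.min (lw M) (lw N)) (fun i => (lcoef M i + lcoef N i)%R).

Definition lsubL (M N : LS) : LS :=
  laurent_of (Z.min (lw M) (lw N)) (fun i => (lcoef M i - lcoef N i)%R).

Definition lmulL (M N : LS) : LS :=
  Laurent (Z.add (lw M) (lw N))
    (fun n => (\sum_(k < n.+1) lc M k * lc N (n - k)%N)%R).

Definition polyL (q : {poly F}) : LS :=
  laurent_of (Z.opp (Z.of_nat (size q)))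
    (fun i => if Z.leb i 0 then (q`_(Z.to_nat (Z.opp i)))%R else 0%R).

Definition polypart (M : LS) : {poly F} :=
  \poly_(j < (Z.to_nat (Z.opp (lw M))).+1) lcoef M (Z.opp (Z.of_nat j)).

Definition fracpart (M : LS) : LS := laurent_of (Z.max 1 (lw M)) (lcoef M).

Definition irrational (L : LS) : Prop :=
  forall P Q : {poly F}, Q != 0%R -> ~ leqL (lmulL (polyL Q) L) (polyL P).

(* A is the continued fraction expansion [A_0; A_1, ...] of L:
   complete quotients L_0 = L, A_n = polynomial part of L_n,
   L_n = A_n + 1/L_{n+1}, i.e. (L_n - A_n) * L_{n+1} = 1, and deg A_n >= 1 for n >= 1. *)
Definition is_cf_expansion (L : LS) (A : nat -> {poly F}) : Prop :=
  exists Ls : nat -> LS, leqL (Ls 0%N) L /\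
    forall n, A n = polypart (Ls n) /\ (0 < n -> 1 < size (A n))%N /\
      leqL (lmulL (lsubL (Ls n) (polyL (A n))) (Ls n.+1)) lone.

(* n(X) = n_0 + n_1 X + ... for n = n_0 + n_1 p + ... in base p *)
Definition natpoly (n : nat) : {poly F} :=
  \poly_(i < n.+1) (((n %/ p ^ i) %% p)%N%:R)%R.

Definition digit (c : F) : nat := nat_of_ord c.

(* x is the n-th point of the digital Kronecker sequence associated with M:
   {n(X) M} = sum_{i>=1} c_i X^{-i} and x = sum_{i>=1} c_i p^{-i}. *)
Definition kronecker_point (M : LS) (n : nat) (x : R) : Prop :=
  infinite_sum
    (fun i => Rdiv (INR (digit (lcoef (fracpart (lmulL (polyL (natpoly n)) M))
                                       (Z.of_nat i.+1))))
                   (pow (INR p) i.+1)) x.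

End Laurent.

Definition inRbox (lo x hi : R) : bool :=
  if Rle_dec lo x then (if Rlt_dec x hi then true else false) else false.

Definition is_net (p t m : nat) (x : nat -> R) (N : nat) : Prop :=
  (t <= m)%N /\
  forall a, (a < p ^ (m - t))%N ->
    (\sum_(j < p ^ m)
        (if inRbox (Rdiv (INR a) (pow (INR p) (m - t))) (x (N + j)%N)
                   (Rdiv (INR a.+1) (pow (INR p) (m - t))) then 1 else 0))%N
    = p ^ t.

Definition is_t_sequence (p t : nat) (x : nat -> R) : Prop :=
  (forall n, Rle 0 (x n) /\ Rlt (x n) 1) /\
  forall m k, (t < m)%N -> is_net p t m x (k * p ^ m).

(* The first s base-p digits of x_n are the coefficients of X^-1, ..., X^-s of
   n(X) B L.  Writing n = k p^m + j with j < p^m, the vector of these digits is an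
   affine function of the digit vector of j whose linear part is the m x s Hankel
   matrix of the coefficients of B L.  With s = m - t, the indices j for which x_n
   falls into a given interval of length p^-s thus form a fiber of this affine map,
   of size p^(m-s) = p^t as soon as the Hankel matrix has rank s.

   The rank statement is a property of continued fractions: for Q <> 0, Q L has a
   nonzero coefficient at some X^-i with 1 <= i <= deg Q + K.  Otherwise the
   polynomial part R of Q (L - A_0), of degree deg Q - deg A_1, would inherit the
   same defect for the complete quotient L_1 = 1 / (L - A_0), and one concludes by
   induction on deg Q.  The same fact applied to (X - 1) X^s n(X) shows that the
   digits of x_n are not eventually p - 1, so that x_n lies in the interval its
   digits indicate. *)

From Stdlib Require Import Reals ZArith Lia Lra Classical.
Set Implicit Arguments. Unset Strict Implicit.

Open Scope R_scope.

Section DigitExpansion.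
Variables (p : nat) (d : nat -> nat).
Hypothesis p_ge2 : (2 <= p)%nat.
Hypothesis d_lt_p : forall i, (d i < p)%nat.

Fixpoint digit_prefix (s : nat) : nat :=
  match s with O => O | S s => p * digit_prefix s + d s end%nat.

Fixpoint partial_expansion (N : nat) : R :=
  match N with O => 0 | S N => partial_expansion N + INR (d N) / INR p ^ S N end.

Local Notation P := (INR p).

Lemma base_gt1 : 1 < P.
Proof. apply (lt_INR 1); lia. Qed.

Lemma base_pow_gt0 n : 0 < P ^ n.
Proof. apply pow_lt; pose proof base_gt1; lra. Qed.

Lemma sum_expansion_digits N :
  sum_f_R0 (fun i => INR (d i) / P ^ S i) N = partial_expansion (S N).
Proof.
induction N as [|N IH]; [simpl; lra|].
rewrite tech5, IH; reflexivity.
Qed.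

Lemma partial_expansion_prefix s : partial_expansion s = INR (digit_prefix s) / P ^ s.
Proof.
induction s as [|s IH]; simpl; [unfold Rdiv; lra|].
rewrite IH, plus_INR, mult_INR.
pose proof (base_pow_gt0 s); pose proof base_gt1; field; lra.
Qed.

(* Digits at most p - 1 bound the tail after position s by 1/p^s; the digit
   d i0 <= p - 2 keeps it a further 1/p^(i0+1) below, which makes the final
   upper bound strict. *)
Lemma partial_expansion_bounds s i0 : (s <= i0)%nat -> (d i0 < p - 1)%nat -> forall k,
  partial_expansion s <= partial_expansion (s + k) /\
  partial_expansion (s + k) <= partial_expansion s + / P ^ s - / P ^ (s + k)
    - (if Nat.ltb i0 (s + k) then / P ^ S i0 else 0).
Proof.
intros hs hi0 k; induction k as [|k [IH1 IH2]].
- rewrite Nat.add_0_r; destruct (Nat.ltb_spec i0 s); [lia | lra].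
- replace (s + S k)%nat with (S (s + k)) by lia.
  set (N := (s + k)%nat) in *; simpl partial_expansion; simpl pow.
  pose proof (base_pow_gt0 N); pose proof base_gt1.
  set (u := / (P * P ^ N)).
  assert (hu : 0 < u) by (apply Rinv_0_lt_compat; nra).
  assert (hPN : / P ^ N = P * u) by (unfold u; field; lra).
  assert (hd0 : 0 <= INR (d N)) by apply pos_INR.
  assert (hd1 : INR (d N) + 1 <= P).
  { rewrite <- S_INR; apply le_INR; specialize (d_lt_p N); lia. }
  replace (INR (d N) / (P * P ^ N)) with (INR (d N) * u) by (unfold u, Rdiv; ring).
  rewrite hPN in IH2; split; [nra|].
  destruct (Nat.ltb_spec i0 N); destruct (Nat.ltb_spec i0 (S N)); try lia.
  + change (/ (P * P ^ i0)) with (/ P ^ S i0); nra.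
  + assert (hN : N = i0) by lia.
    assert (hd2 : INR (d N) + 2 <= P).
    { replace (INR (d N) + 2) with (INR (S (S (d N)))) by (rewrite !S_INR; ring).
      apply le_INR; rewrite hN; lia. }
    replace (/ (P * P ^ i0)) with u by (unfold u; rewrite hN; reflexivity).
    nra.
  + nra.
Qed.

Lemma infinite_sum_le (g : nat -> R) x b N0 : infinite_sum g x ->
  (forall n, (N0 <= n)%nat -> sum_f_R0 g n <= b) -> x <= b.
Proof.
intros hx hb; destruct (Rle_or_lt x b) as [|h]; auto.
destruct (hx (x - b)) as [N hN]; [lra|].
specialize (hN (max N N0) (Nat.le_max_l _ _)); specialize (hb (max N N0) (Nat.le_max_r _ _)).
unfold R_dist in hN; rewrite Rabs_minus_sym in hN.
pose proof (Rle_abs (x - sum_f_R0 g (max N N0))); lra.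
Qed.

Lemma infinite_sum_ge (g : nat -> R) x b N0 : infinite_sum g x ->
  (forall n, (N0 <= n)%nat -> b <= sum_f_R0 g n) -> b <= x.
Proof.
intros hx hb; destruct (Rle_or_lt b x) as [|h]; auto.
destruct (hx (b - x)) as [N hN]; [lra|].
specialize (hN (max N N0) (Nat.le_max_l _ _)); specialize (hb (max N N0) (Nat.le_max_r _ _)).
unfold R_dist in hN; pose proof (Rle_abs (sum_f_R0 g (max N N0) - x)); lra.
Qed.

Lemma digit_expansion_box x s i0 : (s <= i0)%nat -> (d i0 < p - 1)%nat ->
  infinite_sum (fun i => INR (d i) / INR p ^ S i) x ->
  INR (digit_prefix s) / INR p ^ s <= x < (INR (digit_prefix s) + 1) / INR p ^ s.
Proof.
intros hs hi0 hx.
pose proof (base_pow_gt0 s); pose proof (base_pow_gt0 (S i0)).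
assert (hb : forall n, (s + i0 <= n)%nat -> partial_expansion s <=
  sum_f_R0 (fun i => INR (d i) / P ^ S i) n <= partial_expansion s + / P ^ s - / P ^ S i0).
{ intros n hn; rewrite sum_expansion_digits.
  destruct (partial_expansion_bounds hs hi0 (S n - s)) as [h1 h2].
  replace (s + (S n - s))%nat with (S n) in h1, h2 by lia.
  destruct (Nat.ltb_spec i0 (S n)); [|lia].
  pose proof (Rinv_0_lt_compat _ (base_pow_gt0 (S n))); lra. }
rewrite <- partial_expansion_prefix.
replace ((INR (digit_prefix s) + 1) / P ^ s) with (partial_expansion s + / P ^ s)
  by (rewrite partial_expansion_prefix; field; lra).
split.
- apply (infinite_sum_ge (N0 := (s + i0)%nat) hx); intros n hn; apply hb; auto.
- assert (x <= partial_expansion s + / P ^ s - / P ^ S i0)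
    by (apply (infinite_sum_le (N0 := (s + i0)%nat) hx); intros n hn; apply hb; auto).
  pose proof (Rinv_0_lt_compat _ (base_pow_gt0 (S i0))); lra.
Qed.

Lemma digit_expansion_unit x i0 : (d i0 < p - 1)%nat ->
  infinite_sum (fun i => INR (d i) / INR p ^ S i) x -> 0 <= x < 1.
Proof.
intros hi0 hx; destruct (digit_expansion_box (Nat.le_0_l i0) hi0 hx) as [h1 h2].
simpl in h1, h2; unfold Rdiv in h1, h2; rewrite Rinv_1 in h1, h2; lra.
Qed.

End DigitExpansion.

Lemma inRbox_scaled (Q x : R) (h a : nat) : 0 < Q ->
  INR h / Q <= x < (INR h + 1) / Q ->
  inRbox (INR a / Q) x (INR (S a) / Q) = Nat.eqb h a.
Proof.
intros hQ [h1 h2]; unfold inRbox.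
assert (lt_div : forall u v, u / Q < v / Q -> u < v).
{ intros u v huv; apply Rmult_lt_reg_r with (/ Q); [apply Rinv_0_lt_compat|]; lra. }
rewrite S_INR.
destruct (Rle_dec (INR a / Q) x); destruct (Rlt_dec x ((INR a + 1) / Q));
  destruct (Nat.eqb_spec h a) as [e|e]; try (subst; lra); auto.
exfalso; apply e.
assert (ha : INR a < INR h + 1) by (apply lt_div; lra).
assert (hh : INR h < INR a + 1) by (apply lt_div; lra).
rewrite <- S_INR in ha, hh; apply INR_lt in ha; apply INR_lt in hh; lia.
Qed.

Close Scope R_scope.

From mathcomp Require Import all_boot all_order all_algebra zify.
Import GRing.Theory.

Section ZSum.
Variable R : comPzRingType.
Local Open Scope Z_scope.

Definition zsum (lo hi : Z) (F : Z -> R) : R :=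
  \sum_(0 <= k < Z.to_nat (hi - lo)) F (Z.add lo (Z.of_nat k)).

Lemma eq_zsum lo hi F G : (forall z, lo <= z < hi -> F z = G z) ->
  zsum lo hi F = zsum lo hi G.
Proof. by move=> eqFG; apply: eq_big_nat => k /andP[_ hk]; apply: eqFG; lia. Qed.

Lemma zsum_eq0 lo hi F : (forall z, lo <= z < hi -> F z = 0%R) -> zsum lo hi F = 0%R.
Proof. by move=> F0; rewrite (eq_zsum (G := fun=> 0%R)) // /zsum big1. Qed.

Lemma zsum_geq lo hi F : hi <= lo -> zsum lo hi F = 0%R.
Proof. by move=> hlo; rewrite /zsum (_ : Z.to_nat _ = 0%N) ?big_geq //; lia. Qed.

Lemma zsum1 lo F : zsum lo (lo + 1) F = F lo.
Proof. by rewrite /zsum (_ : Z.to_nat _ = 1%N) ?big_nat1 ?Z.add_0_r //; lia. Qed.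

Lemma zsum_cat lo mid hi F : lo <= mid <= hi ->
  zsum lo hi F = (zsum lo mid F + zsum mid hi F)%R.
Proof.
move=> hmid; rewrite /zsum.
have -> : Z.to_nat (hi - lo) = (Z.to_nat (mid - lo) + Z.to_nat (hi - mid))%N by lia.
rewrite (big_cat_nat _ (leq_addr _ _)) //=; congr (_ + _)%R.
rewrite -{1}(add0n (Z.to_nat (mid - lo))) big_addn addKn.
by apply: eq_bigr => k _; congr F; lia.
Qed.

Lemma zsum_narrow a b c e F : a <= c -> e <= b ->
  (forall z, z < c \/ e <= z -> F z = 0%R) -> zsum a b F = zsum c e F.
Proof.
move=> hac heb F0; have [hce|hce] := Z.le_gt_cases c e; last first.
  by rewrite [zsum c e F]zsum_geq; [apply: zsum_eq0 => z _; apply: F0|]; lia.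
rewrite (@zsum_cat a c b) ?(@zsum_cat c e b) ?(@zsum_eq0 a c) ?(@zsum_eq0 e b) ?add0r ?addr0 //.
all: try (move=> z hz; apply: F0); lia.
Qed.

Lemma eq_zsum_support a1 b1 a2 b2 F :
  (forall z, z < a1 \/ b1 <= z -> F z = 0%R) ->
  (forall z, z < a2 \/ b2 <= z -> F z = 0%R) ->
  zsum a1 b1 F = zsum a2 b2 F.
Proof.
move=> F1 F2; set c := Z.max a1 a2; set e := Z.min b1 b2.
have F0 z : z < c \/ e <= z -> F z = 0%R.
  by move=> hz; have [/F1|/F2] : (z < a1 \/ b1 <= z) \/ (z < a2 \/ b2 <= z) by lia.
by rewrite (@zsum_narrow a1 b1 c e) ?(@zsum_narrow a2 b2 c e) //; lia.
Qed.

Lemma zsum_shift lo hi c F : zsum lo hi (fun z => F (z + c)) = zsum (lo + c) (hi + c) F.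
Proof.
rewrite /zsum (_ : Z.to_nat (hi + c - (lo + c)) = Z.to_nat (hi - lo)); last lia.
by apply: eq_bigr => k _; congr F; lia.
Qed.

Lemma zsum_rev lo hi F : zsum lo hi (fun z => F (- z)) = zsum (- hi + 1) (- lo + 1) F.
Proof.
rewrite /zsum (_ : Z.to_nat (- lo + 1 - (- hi + 1)) = Z.to_nat (hi - lo)); last lia.
by rewrite big_nat_rev; apply: eq_big_nat => k /andP[_ hk]; congr F; lia.
Qed.

Lemma zsumD lo hi F G : zsum lo hi (fun z => F z + G z)%R = (zsum lo hi F + zsum lo hi G)%R.
Proof. exact: big_split. Qed.

Lemma zsumMl lo hi c F : zsum lo hi (fun z => c * F z)%R = (c * zsum lo hi F)%R.
Proof. by rewrite /zsum mulr_sumr. Qed.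

Lemma zsumMr lo hi c F : zsum lo hi (fun z => F z * c)%R = (zsum lo hi F * c)%R.
Proof. by rewrite /zsum mulr_suml. Qed.

Lemma exchange_zsum lo1 hi1 lo2 hi2 (F : Z -> Z -> R) :
  zsum lo1 hi1 (fun a => zsum lo2 hi2 (F a)) = zsum lo2 hi2 (fun b => zsum lo1 hi1 (F^~ b)).
Proof. exact: exchange_big_nat. Qed.

Lemma zsum_ord n F : zsum 0 (Z.of_nat n) F = (\sum_(k < n) F (Z.of_nat k))%R.
Proof.
rewrite /zsum (_ : Z.to_nat (Z.of_nat n - 0) = n); last lia.
by rewrite big_mkord; apply: eq_bigr => k _; congr F; lia.
Qed.

End ZSum.

Section LaurentCoefficients.
Variable p : nat.
Local Notation F := 'F_p.
Local Notation LS := (laurent p).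
Local Open Scope Z_scope.

Lemma lcoef_lt (M : LS) z : z < lw M -> lcoef M z = 0%R.
Proof. by move=> h; rewrite /lcoef (_ : Z.leb _ _ = false) //; apply/Z.leb_gt. Qed.

Lemma lcoef_laurent_of w f z :
  lcoef (@laurent_of p w f) z = if Z.leb w z then f z else 0%R.
Proof. by rewrite /lcoef /=; case: (Z.leb_spec w z) => h //; congr f; lia. Qed.

Definition zcoef (Q : {poly F}) (r : Z) : F :=
  if Z.leb 0 r then (Q`_(Z.to_nat r))%R else 0%R.

Lemma coef_size_leZ (Q : {poly F}) r : Z.of_nat (size Q) <= r -> (Q`_(Z.to_nat r))%R = 0%R.
Proof.
by move=> h; rewrite nth_default //; apply/leP/Nat2Z.inj_le; rewrite Z2Nat.id //; lia.
Qed.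

Lemma zcoef_out (Q : {poly F}) r : r < 0 \/ Z.of_nat (size Q) <= r -> zcoef Q r = 0%R.
Proof.
by rewrite /zcoef; case: (Z.leb_spec 0 r) => h [] h' //; [lia | exact: coef_size_leZ].
Qed.

Lemma lcoef_polyL (Q : {poly F}) z : lcoef (polyL Q) z = zcoef Q (- z).
Proof.
rewrite /polyL lcoef_laurent_of /zcoef.
case: (Z.leb_spec (- Z.of_nat (size Q)) z) => h1; case: (Z.leb_spec z 0) => h2;
  case: (Z.leb_spec 0 (- z)) => h3 //; try lia.
by rewrite coef_size_leZ //; lia.
Qed.

Lemma lcoef_lsubL (M N : LS) z : lcoef (lsubL M N) z = (lcoef M z - lcoef N z)%R.
Proof.
rewrite /lsubL lcoef_laurent_of; case: (Z.leb_spec (Z.min (lw M) (lw N)) z) => h //.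
by rewrite !lcoef_lt ?subr0 //; lia.
Qed.

Lemma lcoef_fracpart (M : LS) z : 1 <= z -> lcoef (fracpart M) z = lcoef M z.
Proof.
rewrite /fracpart lcoef_laurent_of; case: (Z.leb_spec (Z.max 1 (lw M)) z) => h h1 //.
by rewrite lcoef_lt //; lia.
Qed.

Lemma lcoef_lone z : lcoef (lone p) z = if Z.eqb z 0 then 1%R else 0%R.
Proof.
rewrite /lcoef /=; case: (Z.leb_spec 0 z) => h; case: (Z.eqb_spec z 0) => h' //; try lia.
  by rewrite h'.
by rewrite (_ : (Z.to_nat (z - 0) == 0)%N = false) //; apply/eqP; lia.
Qed.

Lemma lcoef_lmulL (M N : LS) z : lcoef (lmulL M N) z =
  zsum (lw M) (z - lw N + 1) (fun a => lcoef M a * lcoef N (Z.sub z a))%R.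
Proof.
rewrite /lcoef /lmulL /= /zsum.
case: (Z.leb_spec (lw M + lw N) z) => h; last first.
  by rewrite (_ : Z.to_nat _ = 0%N) ?big_geq //; lia.
rewrite (_ : Z.to_nat (z - lw N + 1 - lw M) = (Z.to_nat (z - (lw M + lw N))).+1); last lia.
rewrite big_mkord; apply: eq_bigr => [[k hk]] _ /=.
rewrite (_ : Z.leb (lw M) _ = true); last by apply/Z.leb_le; lia.
rewrite (_ : Z.leb (lw N) _ = true); last by apply/Z.leb_le; lia.
by congr (lc M _ * lc N _)%R; lia.
Qed.

(* If [f i] is the coefficient of X^{-i} of a series M, then [pact Q f i] is
   that of Q M (lemma [lcoef_mul_polyL]). *)
Definition pact (Q : {poly F}) (f : Z -> F) (z : Z) : F :=
  zsum 0 (Z.of_nat (size Q)) (fun r => zcoef Q r * f (Z.add z r))%R.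

Lemma pact_widen (Q : {poly F}) f z N : (size Q <= N)%N ->
  pact Q f z = zsum 0 (Z.of_nat N) (fun r => zcoef Q r * f (Z.add z r))%R.
Proof. by move=> hN; apply: eq_zsum_support => r hr; rewrite zcoef_out ?mul0r //; lia. Qed.

Lemma eq_pact (Q : {poly F}) f g z : f =1 g -> pact Q f z = pact Q g z.
Proof. by move=> eq_fg; apply: eq_zsum => r _; rewrite eq_fg. Qed.

Lemma pact0 f z : pact 0 f z = 0%R.
Proof. by rewrite /pact size_poly0 zsum_geq. Qed.

Lemma pactD (P Q : {poly F}) f z : pact (P + Q) f z = (pact P f z + pact Q f z)%R.
Proof.
set N := maxn (size P) (size Q).
rewrite !(@pact_widen _ _ _ N) ?leq_maxl ?leq_maxr ?(leq_trans (size_polyD _ _)) //.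
rewrite -zsumD; apply: eq_zsum => r _; rewrite -mulrDl /zcoef.
by case: (Z.leb _ _); rewrite ?coefD ?addr0.
Qed.

Lemma pactZ c (Q : {poly F}) f z : pact (c *: Q) f z = (c * pact Q f z)%R.
Proof.
rewrite !(@pact_widen _ _ _ (size Q)) ?size_scale_leq // -zsumMl.
apply: eq_zsum => r _; rewrite mulrA /zcoef.
by case: (Z.leb _ _); rewrite ?coefZ ?mulr0.
Qed.

Lemma pactC (c : F) f z : pact c%:P f z = (c * f z)%R.
Proof.
rewrite (@pact_widen _ _ _ 1) ?size_polyC ?leq_b1 //.
by rewrite (_ : Z.of_nat 1 = 0 + 1) // zsum1 /zcoef /= coefC Z.add_0_r.
Qed.

Lemma pactMX (P : {poly F}) f z : pact (P * 'X) f z = pact P f (z + 1).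
Proof.
rewrite (@pact_widen _ _ _ (size P).+1); last first.
  by rewrite (leq_trans (size_polyMleq _ _)) // size_polyX addn2.
rewrite (_ : Z.of_nat (size P).+1 = Z.of_nat (size P) + 1); last lia.
rewrite (@zsum_cat _ 0 1); last lia.
rewrite {1}(_ : 1 = 0 + 1) // zsum1 {1}/zcoef /= coefMX /= mul0r add0r.
rewrite -(zsum_shift 0 _ 1); apply: eq_zsum => r hr.
rewrite /zcoef; case: (Z.leb_spec 0 r) => h1; case: (Z.leb_spec 0 (r + 1)) => h2; try lia.
rewrite coefMX (_ : (Z.to_nat (r + 1) == 0)%N = false); last by apply/eqP; lia.
by congr (P`_ _ * f _)%R; lia.
Qed.

Lemma pactM (P1 P2 : {poly F}) f z : pact (P1 * P2) f z = pact P1 (pact P2 f) z.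
Proof.
elim/poly_ind: P1 z => [|P c IH] z; first by rewrite mul0r !pact0.
by rewrite mulrDl mulrAC pactD pactMX IH mul_polyC pactZ pactD pactMX pactC.
Qed.

Lemma pactXn n f z : pact 'X^n f z = f (z + Z.of_nat n).
Proof.
elim: n z => [|n IH] z; first by rewrite expr0 -polyC1 pactC mul1r Z.add_0_r.
by rewrite exprSr pactMX IH; congr f; lia.
Qed.

Lemma pactXsub1 f z : pact ('X - 1) f z = (f (Z.add z 1) - f z)%R.
Proof.
rewrite -polyC1 -polyCN pactD pactC -['X%R]mul1r pactMX -polyC1 pactC.
by rewrite !mul1r mulN1r.
Qed.

Lemma lcoef_mul_polyL (Q : {poly F}) (M : LS) z :
  lcoef (lmulL (polyL Q) M) z = pact Q (lcoef M) z.
Proof.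
rewrite lcoef_lmulL /pact.
rewrite [RHS](eq_zsum (G := fun r => lcoef (polyL Q) (Z.opp r) * lcoef M (Z.sub z (Z.opp r)))%R); last first.
  by move=> r _; rewrite lcoef_polyL Z.opp_involutive Z.sub_opp_r.
rewrite (zsum_rev _ _ (fun a => lcoef (polyL Q) a * lcoef M (Z.sub z a))%R).
apply: eq_zsum_support => a ha.
  case: ha => ha; first by rewrite lcoef_lt ?mul0r.
  by rewrite [lcoef M _]lcoef_lt ?mulr0 //; lia.
by rewrite lcoef_polyL zcoef_out ?mul0r //; lia.
Qed.

End LaurentCoefficients.

Section ContinuedFractionWindow.
Variable p : nat.
Local Notation F := 'F_p.
Local Open Scope Z_scope.

Variables (Ls : nat -> laurent p) (A : nat -> {poly F}) (K : nat).
Hypothesis cf_polypart : forall n, A n = polypart (Ls n).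
Hypothesis cf_deg_gt0 : forall n, (0 < n)%N -> (1 < size (A n))%N.
Hypothesis cf_inverse :
  forall n, leqL (lmulL (lsubL (Ls n) (polyL (A n))) (Ls n.+1)) (lone p).
Hypothesis cf_deg_le : forall d, (0 < d)%N -> ((size (A d)).-1 <= K)%N.

Definition qcoef n := lcoef (Ls n).

(* Coefficients of the fractional part L_n - A_n of the n-th complete quotient. *)
Definition fcoef n z : F := if Z.leb 1 z then qcoef n z else 0%R.

Definition next_deg n := (size (A n.+1)).-1.

Lemma qcoef_opp n (j : nat) : qcoef n (- Z.of_nat j) = ((A n)`_j)%R.
Proof.
rewrite cf_polypart /polypart coef_poly /qcoef.
by case: ltnP => h; [congr lcoef; lia | rewrite lcoef_lt //; lia].
Qed.

Lemma qcoef_nonpos n z : z <= 0 -> qcoef n z = ((A n)`_(Z.to_nat (- z)))%R.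
Proof. by move=> h; rewrite -qcoef_opp; congr qcoef; lia. Qed.

Lemma qcoef_below n z : z < - Z.of_nat (size (A n)).-1 -> qcoef n z = 0%R.
Proof. by move=> h; rewrite qcoef_nonpos ?coef_size_leZ //; lia. Qed.

Lemma lcoef_fracquotient n z : lcoef (lsubL (Ls n) (polyL (A n))) z = fcoef n z.
Proof.
rewrite lcoef_lsubL lcoef_polyL /fcoef -/(qcoef n z).
case: (Z.leb_spec 1 z) => h; first by rewrite zcoef_out ?subr0 //; lia.
by rewrite /zcoef (_ : Z.leb 0 (- z) = true) ?qcoef_nonpos ?subrr //; apply/Z.leb_le; lia.
Qed.

(* The identity (L_n - A_n) L_(n+1) = 1, read off coefficientwise on any range
   containing the support of the summand. *)
Lemma fcoef_mul_next n z W1 W2 :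
  (forall a, a < W1 \/ W2 <= a -> (fcoef n a * qcoef n.+1 (Z.sub z a))%R = 0%R) ->
  zsum W1 W2 (fun a => fcoef n a * qcoef n.+1 (Z.sub z a))%R = if Z.eqb z 0 then 1%R else 0%R.
Proof.
move=> out0; rewrite -lcoef_lone -(cf_inverse n z) lcoef_lmulL.
rewrite [RHS](eq_zsum (G := fun a => fcoef n a * qcoef n.+1 (Z.sub z a))%R); last first.
  by move=> a _; rewrite lcoef_fracquotient.
apply: eq_zsum_support => // a [] ha.
  by rewrite -lcoef_fracquotient lcoef_lt ?mul0r.
by rewrite /qcoef lcoef_lt ?mulr0 //; lia.
Qed.

Lemma next_deg_gt0 n : (0 < next_deg n)%N.
Proof. by rewrite /next_deg -subn1 subn_gt0 cf_deg_gt0. Qed.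

Lemma next_deg_le n : (next_deg n <= K)%N.
Proof. exact: cf_deg_le. Qed.

Lemma qcoef_next_lead n : qcoef n.+1 (- Z.of_nat (next_deg n)) != 0%R.
Proof.
rewrite qcoef_opp /next_deg -lead_coefE lead_coef_eq0 -size_poly_eq0.
by have := cf_deg_gt0 (ltn0Sn n); case: (size _).
Qed.

(* L_n - A_n = 1 / L_(n+1) has valuation exactly deg A_(n+1). *)
Lemma fcoef_below n a : a < Z.of_nat (next_deg n) -> fcoef n a = 0%R.
Proof.
move: {2}(Z.to_nat a) (leqnn (Z.to_nat a)) => k.
elim: k a => [|k IH] b hb hbd; have [hb0|hb0] := Z.le_gt_cases b 0.
- by rewrite /fcoef (_ : Z.leb 1 b = false) //; apply/Z.leb_gt; lia.
- lia.
- by rewrite /fcoef (_ : Z.leb 1 b = false) //; apply/Z.leb_gt; lia.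
set z := b - Z.of_nat (next_deg n).
have out0 a : a < b \/ b + 1 <= a -> (fcoef n a * qcoef n.+1 (Z.sub z a))%R = 0%R.
  case=> ha; first by rewrite IH ?mul0r //; lia.
  by rewrite qcoef_below ?mulr0 // -/(next_deg n); lia.
have := fcoef_mul_next out0; rewrite zsum1 (_ : Z.eqb z 0 = false); last by apply/Z.eqb_neq; lia.
rewrite (_ : Z.sub z b = - Z.of_nat (next_deg n)); last lia.
by move/eqP; rewrite mulf_eq0 (negbTE (qcoef_next_lead n)) orbF => /eqP.
Qed.

Lemma fcoef_next_deg n :
  (fcoef n (Z.of_nat (next_deg n)) * qcoef n.+1 (- Z.of_nat (next_deg n)))%R = 1%R.
Proof.
have := @fcoef_mul_next n 0 (Z.of_nat (next_deg n)) (Z.of_nat (next_deg n) + 1).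
rewrite zsum1 /=; apply=> a [] ha; first by rewrite fcoef_below ?mul0r.
by rewrite qcoef_below ?mulr0 // -/(next_deg n); lia.
Qed.

Lemma fcoef_next_deg_neq0 n : fcoef n (Z.of_nat (next_deg n)) != 0%R.
Proof. by apply/eqP => h; have := fcoef_next_deg n; rewrite h mul0r => /eqP; rewrite eq_sym oner_eq0. Qed.

Lemma pact_fcoef n (Q : {poly F}) i : 1 <= i -> pact Q (qcoef n) i = pact Q (fcoef n) i.
Proof.
move=> hi; apply: eq_zsum => r hr.
by rewrite /fcoef (_ : Z.leb 1 (i + r) = true) //; apply/Z.leb_le; lia.
Qed.

Lemma pact_fcoef_lead n (Q : {poly F}) : Q != 0%R ->
  pact Q (fcoef n) (Z.of_nat (next_deg n) - Z.of_nat (size Q).-1)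
  = (lead_coef Q * fcoef n (Z.of_nat (next_deg n)))%R.
Proof.
move=> Q0; set q := (size Q).-1.
have sizeQ : size Q = q.+1 by rewrite /q prednK // lt0n size_poly_eq0.
rewrite /pact (@eq_zsum_support _ _ _ (Z.of_nat q) (Z.of_nat q + 1)).
- rewrite zsum1 /zcoef (_ : Z.leb 0 (Z.of_nat q) = true); last by apply/Z.leb_le; lia.
  by rewrite lead_coefE -/q Nat2Z.id; congr (_ * fcoef n _)%R; lia.
- by move=> r hr; rewrite zcoef_out ?mul0r.
move=> r [] hr; last by rewrite zcoef_out ?mul0r // sizeQ; lia.
have [h0|h0] := Z.le_gt_cases 0 r; last by rewrite zcoef_out ?mul0r //; lia.
by rewrite fcoef_below ?mulr0 //; lia.
Qed.

(* [Q (L_n - A_n) L_(n+1) = Q] has no fractional part. *)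
Lemma pact_fcoef_mul_next n (Q : {poly F}) i : 1 <= i ->
  zsum (Z.of_nat (next_deg n) - Z.of_nat (size Q).-1) (i + Z.of_nat (next_deg n) + 1)
    (fun b => pact Q (fcoef n) b * qcoef n.+1 (Z.sub i b))%R = 0%R.
Proof.
move=> hi; rewrite /pact.
rewrite (eq_zsum (G := fun b => zsum 0 (Z.of_nat (size Q))
   (fun r => zcoef Q r * fcoef n (Z.add b r) * qcoef n.+1 (Z.sub i b)))%R); last first.
  by move=> b _; rewrite -zsumMr.
rewrite exchange_zsum; apply: zsum_eq0 => r hr.
rewrite (eq_zsum (G := fun b => zcoef Q r *
    (fun a => fcoef n a * qcoef n.+1 (Z.sub (Z.add i r) a)) (Z.add b r)))%R; last first.
  by move=> b _ /=; rewrite mulrA; congr (_ * qcoef _ _)%R; lia.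
rewrite zsumMl (zsum_shift _ _ r (fun a => fcoef n a * qcoef n.+1 (Z.sub (Z.add i r) a))%R).
rewrite fcoef_mul_next; first by rewrite (_ : Z.eqb _ 0 = false) ?mulr0 //; apply/Z.eqb_neq; lia.
move=> a [] ha; first by rewrite fcoef_below ?mul0r //; lia.
by rewrite qcoef_below ?mulr0 // -/(next_deg n); lia.
Qed.

Definition quotient_polypart n (Q : {poly F}) : {poly F} :=
  \poly_(u < ((size Q).-1 - next_deg n).+1) pact Q (fcoef n) (- Z.of_nat u).

Lemma size_quotient_polypart n (Q : {poly F}) : Q != 0%R -> (next_deg n <= (size Q).-1)%N ->
  size (quotient_polypart n Q) = ((size Q).-1 - next_deg n).+1.
Proof.
move=> Q0 dq; rewrite size_poly_eq //=.
rewrite (_ : - Z.of_nat ((size Q).-1 - next_deg n) =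
  Z.of_nat (next_deg n) - Z.of_nat (size Q).-1); last lia.
by rewrite pact_fcoef_lead // mulf_neq0 ?lead_coef_eq0 ?fcoef_next_deg_neq0.
Qed.

Lemma pact_quotient_polypart n (Q : {poly F}) i : (next_deg n <= (size Q).-1)%N ->
  pact (quotient_polypart n Q) (qcoef n.+1) i =
  zsum (Z.of_nat (next_deg n) - Z.of_nat (size Q).-1) 1
    (fun b => pact Q (fcoef n) b * qcoef n.+1 (Z.sub i b))%R.
Proof.
move=> dq; set e := ((size Q).-1 - next_deg n)%N.
set G := fun b => (pact Q (fcoef n) b * qcoef n.+1 (Z.sub i b))%R.
rewrite (@pact_widen _ _ _ _ e.+1) ?size_poly // (eq_zsum (G := fun u => G (- u))).
  by rewrite zsum_rev; congr zsum; lia.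
move=> u hu; rewrite /G /zcoef (_ : Z.leb 0 u = true); last by apply/Z.leb_le; lia.
rewrite coef_poly (_ : (Z.to_nat u < e.+1)%N = true); last by apply/ltP; lia.
by congr (pact _ _ _ * qcoef _ _)%R; lia.
Qed.

(* If the window of Q L_n vanishes, then so does the (shorter) window of
   R L_(n+1), R the polynomial part of Q (L_n - A_n): indeed
   R L_(n+1) = Q - {Q (L_n - A_n)} L_(n+1). *)
Lemma window_descent n (Q : {poly F}) : (next_deg n <= (size Q).-1)%N ->
  (forall i, 1 <= i <= Z.of_nat ((size Q).-1 + K) -> pact Q (qcoef n) i = 0%R) ->
  forall i, 1 <= i <= Z.of_nat ((size Q).-1 - next_deg n + K) ->
  pact (quotient_polypart n Q) (qcoef n.+1) i = 0%R.
Proof.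
move=> dq window0 i hi; have dK := next_deg_le n.
set G := fun b => (pact Q (fcoef n) b * qcoef n.+1 (Z.sub i b))%R.
have upper0 : zsum 1 (i + Z.of_nat (next_deg n) + 1) G = 0%R.
  by apply: zsum_eq0 => b hb; rewrite /G -pact_fcoef ?window0 ?mul0r //; lia.
rewrite pact_quotient_polypart // -(pact_fcoef_mul_next n Q (_ : 1 <= i)); last lia.
by rewrite [RHS](@zsum_cat _ _ 1) -/G ?upper0 ?addr0 //; lia.
Qed.

Lemma window_coef_neq0 n (Q : {poly F}) : Q != 0%R ->
  exists2 i, 1 <= i <= Z.of_nat ((size Q).-1 + K) & pact Q (qcoef n) i != 0%R.
Proof.
move: n; elim: {Q}(size Q).+1 {-2}Q (ltnSn (size Q)) => // sz IH Q sizeQ n Q0.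
set q := (size Q).-1; have dK := next_deg_le n; have d0 := next_deg_gt0 n.
have [qd|dq] := ltnP q (next_deg n).
  exists (Z.of_nat (next_deg n) - Z.of_nat q); first lia.
  rewrite pact_fcoef ?pact_fcoef_lead //; last lia.
  by rewrite mulf_neq0 ?lead_coef_eq0 ?fcoef_next_deg_neq0.
have [//|no_window] :=
  classic (exists2 i, 1 <= i <= Z.of_nat (q + K) & pact Q (qcoef n) i != 0%R).
have window0 i : 1 <= i <= Z.of_nat (q + K) -> pact Q (qcoef n) i = 0%R.
  by move=> hi; apply/eqP; apply: contraT => ne0; case: no_window; exists i.
set R := quotient_polypart n Q.
have sizeR : size R = (q - next_deg n).+1 by rewrite size_quotient_polypart.
have R0 : R != 0%R by rewrite -size_poly_eq0 sizeR.
have [|i hi] := IH R _ n.+1 R0; first by rewrite sizeR; lia.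
by rewrite window_descent ?eqxx //; move: hi; rewrite sizeR.
Qed.
End ContinuedFractionWindow.

Section BaseDigits.
Variable p : nat.
Hypothesis p_prime : prime p.
Local Notation F := 'F_p.

Lemma digit_lt (c : F) : (digit c < p)%N.
Proof. by rewrite (leq_trans (ltn_ord c)) // Fp_cast. Qed.

Lemma digit_nat n : digit (n%:R : F)%R = n %% p.
Proof. exact: val_Fp_nat. Qed.

Lemma natr_digit (c : F) : (digit c)%:R%R = c.
Proof. by apply: val_inj; rewrite /= val_Fp_nat // modn_small // digit_lt. Qed.

Lemma coef_natpoly n r : ((natpoly p n)`_r)%R = ((n %/ p ^ r) %% p)%:R%R.
Proof.
rewrite coef_poly; case: ltnP => // h.
by rewrite divn_small ?mod0n // (leq_trans h) // ltnW // ltn_expl // prime_gt1.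
Qed.

Lemma modn_expS a s : a %% p ^ s.+1 = a %% p ^ s + (a %/ p ^ s %% p) * p ^ s.
Proof.
have ps0 : 0 < p ^ s by rewrite expn_gt0 prime_gt0.
set D := p ^ s; set q := a %/ D; set r := a %% D; set c := q %% p.
have hr : r < D by rewrite ltn_pmod.
have hc : c < p by rewrite ltn_pmod // prime_gt0.
have ha : a = (q %/ p) * (p * D) + (c * D + r).
  by rewrite {1}(divn_eq a D) -/q -/r {1}(divn_eq q p) -/c; nia.
by rewrite expnS -/D {1}ha modnMDl modn_small //; nia.
Qed.

Lemma sum_base_digits a s : \sum_(i < s) (a %/ p ^ i %% p) * p ^ i = a %% p ^ s.
Proof.
elim: s => [|s IH]; first by rewrite big_ord0 expn0 modn1.
by rewrite big_ord_recr /= IH modn_expS.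
Qed.

Definition digitsv m j : 'rV[F]_m := \row_(r < m) ((j %/ p ^ r) %% p)%:R%R.

Lemma digitsv_inj m j1 j2 : j1 < p ^ m -> j2 < p ^ m -> digitsv m j1 = digitsv m j2 -> j1 = j2.
Proof.
move=> j1m j2m /rowP eq12; rewrite -(modn_small j1m) -(modn_small j2m) -!sum_base_digits.
apply: eq_bigr => r _; have := eq12 r; rewrite !mxE => /(congr1 (@digit p)).
by rewrite !digit_nat !modn_mod => ->.
Qed.

Lemma digitsv_bij m : bijective (fun j : 'I_(p ^ m) => digitsv m j).
Proof.
apply: inj_card_bij; last by rewrite card_ord card_mx card_Fp // mul1n.
by move=> j1 j2 /digitsv_inj eq12; apply: val_inj; apply: eq12.
Qed.

Definition row_value s (w : 'rV[F]_s) := \sum_(i < s) digit (w ord0 i) * p ^ i.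

Lemma row_value_digitsv s a : row_value (digitsv s a) = a %% p ^ s.
Proof. by rewrite -sum_base_digits; apply: eq_bigr => i _; rewrite mxE digit_nat modn_mod. Qed.

Lemma row_value_eq s (w : 'rV[F]_s) a : a < p ^ s -> (row_value w == a) = (w == digitsv s a).
Proof.
move=> a_lt; have [g gK Kg] := digitsv_bij s.
rewrite -{1}[w]Kg row_value_digitsv modn_small //.
by apply/eqP/eqP => [<-|->]; [rewrite Kg | apply: digitsv_inj].
Qed.

End BaseDigits.

Section AffineFibers.
Variable F : finFieldType.
Local Open Scope ring_scope.

Lemma tr_inj_row_full m s (M : 'M[F]_(m, s)) :
  (forall d : 'rV[F]_s, M *m d^T = 0 -> d = 0)%R -> row_full M.
Proof.
move=> tr_inj; rewrite /row_full -mxrank_tr -/(row_free M^T) -kermx_eq0.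
apply/eqP/row_matrixP => i; rewrite row0; apply: tr_inj.
rewrite -[M in M *m _]trmxK -trmx_mul.
by have /sub_kermxP -> := row_sub i (kermx M^T); rewrite trmx0.
Qed.

(* All fibers of an onto affine map have the size of its kernel. *)
Lemma card_affine_fiber m s (M : 'M[F]_(m, s)) (c y : 'rV[F]_s) : row_full M ->
  (#|[set v : 'rV[F]_m | (v *m M + c == y)%R]| * #|F| ^ s)%N = (#|F| ^ m)%N.
Proof.
move=> /row_fullP[N NM].
have onto z : exists v : 'rV[F]_m, (v *m M = z)%R by exists (z *m N); rewrite -mulmxA NM mulmx1.
set k0 := #|[set v : 'rV[F]_m | (v *m M == 0)%R]|.
have fiber z : #|[set v : 'rV[F]_m | v *m M + c == z]| = k0.
  have [vz hvz] := onto (z - c)%R.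
  rewrite /k0 -(card_imset [set v : 'rV[F]_m | (v *m M == 0)%R] (addIr vz)); apply: eq_card => v.
  rewrite inE; apply/eqP/imsetP => [hv|[u]].
    by exists (v - vz)%R; rewrite ?subrK // inE mulmxBl hvz -hv addrK subrr.
  by rewrite inE => /eqP hu ->; rewrite mulmxDl hu hvz add0r subrK.
have card_rV n : #|{: 'rV[F]_n}| = (#|F| ^ n)%N by rewrite card_mx mul1n.
rewrite fiber -!card_rV -[#|{: 'rV_m}|]sum1_card.
rewrite (partition_big (fun v : 'rV[F]_m => v *m M + c)%R predT) //=.
rewrite mulnC -sum_nat_const; apply: eq_bigr => z _.
by rewrite -(fiber z) -sum1_card; apply: eq_bigl => v; rewrite !inE.
Qed.

End AffineFibers.

Section KroneckerNet.
Variable p : nat.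
Hypothesis p_prime : prime p.
Local Notation F := 'F_p.
Local Open Scope Z_scope.

Variables (L : laurent p) (Ls : nat -> laurent p) (A : nat -> {poly F}) (K : nat).
Variable B : {poly F}.
Hypothesis cf_start : leqL (Ls 0) L.
Hypothesis cf_polypart : forall n, A n = polypart (Ls n).
Hypothesis cf_deg_gt0 : forall n, (0 < n)%N -> (1 < size (A n))%N.
Hypothesis cf_inverse :
  forall n, leqL (lmulL (lsubL (Ls n) (polyL (A n))) (Ls n.+1)) (lone p).
Hypothesis cf_deg_le : forall d, (0 < d)%N -> ((size (A d)).-1 <= K)%N.
Hypothesis B_neq0 : B != 0%R.

Definition blcoef : Z -> F := pact B (lcoef L).

Definition kcoef n : Z -> F := pact (natpoly p n) blcoef.

Definition kdigit n i :=
  digit (lcoef (fracpart (lmulL (polyL (natpoly p n)) (lmulL (polyL B) L))) (Z.of_nat i.+1)).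

Lemma kdigitE n i : kdigit n i = digit (kcoef n (Z.of_nat i.+1)).
Proof.
rewrite /kdigit lcoef_fracpart; last lia.
by rewrite lcoef_mul_polyL; congr digit; apply: eq_pact => w; apply: lcoef_mul_polyL.
Qed.

Lemma BL_window_neq0 (D : {poly F}) : D != 0%R ->
  exists2 i, 1 <= i <= Z.of_nat ((size D).-1 + (size B).-1 + K) & pact D blcoef i != 0%R.
Proof.
move=> D0; have DB0 : (D * B != 0)%R by rewrite mulf_neq0.
have [i hi ne0] := window_coef_neq0 cf_polypart cf_deg_gt0 cf_inverse cf_deg_le 0 DB0.
exists i.
  have : (0 < size D)%N by rewrite size_poly_gt0.
  have : (0 < size B)%N by rewrite size_poly_gt0.
  by move: hi; rewrite size_mul //; move: (size D) (size B) => a b; lia.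
by move: ne0; rewrite pactM (@eq_pact _ D _ blcoef) // => w; apply: eq_pact => w'; apply: cf_start.
Qed.

Lemma digit_ge_pred (c : F) : (p.-1 <= digit c)%N -> c = (-1)%R.
Proof.
move=> c_ge; have c_lt := digit_lt p_prime c.
rewrite -(natr_digit p_prime c) (_ : digit c = p.-1); last lia.
by rewrite -subn1 natrB ?pchar_Fp_0 ?sub0r // prime_gt0.
Qed.

(* If all digits from s on were p - 1, the coefficients of (X - 1) X^s n(X) B L
   would vanish at every X^-i, i >= 1. *)
Lemma kdigit_not_max n s : exists2 i0, (s <= i0)%N & (kdigit n i0 < p - 1)%N.
Proof.
have [//|all_max] := classic (exists2 i0, (s <= i0)%N & (kdigit n i0 < p - 1)%N).
have kcoef_max i : (s <= i)%N -> kcoef n (Z.of_nat i.+1) = (-1)%R.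
  move=> si; apply: digit_ge_pred; rewrite -kdigitE leqNgt; apply/negP => lt_max.
  by apply: all_max; exists i => //; lia.
have [n0|n_neq0] := eqVneq (natpoly p n) 0%R.
  have := kcoef_max s (leqnn s); rewrite /kcoef n0 pact0 => /eqP.
  by rewrite eq_sym oppr_eq0 oner_eq0.
have X1 : ('X - 1 != 0 :> {poly F})%R by rewrite -polyC1 polyXsubC_eq0.
have Q0 : ('X^s * (('X - 1) * natpoly p n) != 0 :> {poly F})%R.
  by rewrite mulf_neq0 ?mulf_neq0 // monic_neq0 // monicXn.
have [i hi] := BL_window_neq0 Q0.
rewrite pactM pactXn pactM pactXsub1 -/(kcoef n).
rewrite (_ : Z.add (i + Z.of_nat s) 1 = Z.of_nat (Z.to_nat (i + Z.of_nat s)).+1); last lia.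
rewrite (_ : i + Z.of_nat s = Z.of_nat (Z.to_nat (i + Z.of_nat s) - 1).+1); last lia.
by rewrite !kcoef_max ?subrr ?eqxx //; lia.
Qed.

Lemma base_digit_split k j m r : (j < p ^ m)%N ->
  (k * p ^ m + j) %/ p ^ r %% p =
  (if (r < m)%N then j %/ p ^ r %% p else k %/ p ^ (r - m) %% p)%N.
Proof.
move=> j_lt; have p0 := prime_gt0 p_prime.
case: ltnP => rm.
  have -> : (p ^ m = p ^ (m - r).-1 * p * p ^ r)%N.
    by rewrite -expnSr prednK ?subn_gt0 // -expnD subnK // ltnW.
  by rewrite mulnA divnMDl ?expn_gt0 ?p0 // mulnA modnMDl.
have -> : (p ^ r = p ^ m * p ^ (r - m))%N by rewrite -expnD subnKC.
by rewrite divnMA divnMDl ?expn_gt0 ?p0 // (divn_small j_lt) addn0.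
Qed.

Lemma natpoly_split k j m : (j < p ^ m)%N ->
  natpoly p (k * p ^ m + j) = (\poly_(r < m) ((j %/ p ^ r) %% p)%:R + natpoly p k * 'X^m)%R.
Proof.
move=> j_lt; apply/polyP => r.
rewrite coefD coef_poly coefMXn !(coef_natpoly p_prime) base_digit_split //.
by case: ltnP => _; rewrite ?addr0 ?add0r.
Qed.

(* The digit rows below list the digits of position s, s-1, ..., 1 of {n(X) B L}, so
   that [row_value] reads them as the integer formed by the first s digits. *)
Definition kdigitsv n s : 'rV[F]_s := \row_(i < s) kcoef n (Z.of_nat (s - i)).

Definition hankel m s : 'M[F]_(m, s) := \matrix_(r < m, i < s) blcoef (Z.of_nat (s - i + r)).

Definition kshift k m s : 'rV[F]_s :=
  \row_(i < s) pact (natpoly p k) (fun z => blcoef (Z.add z (Z.of_nat m))) (Z.of_nat (s - i)).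

Lemma kdigitsv_affine k m s j : (j < p ^ m)%N ->
  kdigitsv (k * p ^ m + j) s = (digitsv p m j *m hankel m s + kshift k m s)%R.
Proof.
move=> j_lt; apply/rowP => i; rewrite !mxE /kcoef natpoly_split // pactD pactM.
congr (_ + _)%R; last by apply: eq_pact => w; rewrite pactXn.
rewrite (@pact_widen _ _ _ _ m) ?size_poly // zsum_ord; apply: eq_bigr => r _.
rewrite !mxE /zcoef (_ : Z.leb 0 (Z.of_nat r) = true); last by apply/Z.leb_le; lia.
by rewrite Nat2Z.id coef_poly ltn_ord; congr (_ * blcoef _)%R; lia.
Qed.

Lemma digit_prefix_kdigit n s : digit_prefix p (kdigit n) s = row_value (kdigitsv n s).
Proof.
rewrite /row_value; elim: s => [|s IH]; first by rewrite big_ord0.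
rewrite big_ord_recl expn0 muln1.
rewrite (_ : digit_prefix p _ s.+1 = p * digit_prefix p (kdigit n) s + kdigit n s)%N //.
rewrite IH kdigitE addnC big_distrr /= !mxE subn0; congr (_ + _)%N.
by apply: eq_bigr => i _; rewrite !mxE expnS mulnCA.
Qed.

Lemma hankel_tr_inj m s : (s + (size B).-1 + K <= m + 1)%N ->
  forall d : 'rV[F]_s, (hankel m s *m d^T = 0)%R -> d = 0%R.
Proof.
case: s => [|s] sm d Md0; first by apply/rowP => -[].
apply/eqP; apply: contraT => d_neq0.
set D := (\poly_(u < s.+1) d ord0 (inord (s - u)))%R.
have D_neq0 : D != 0%R.
  apply: contra d_neq0 => /eqP D0; apply/eqP/rowP => i; rewrite mxE.
  have := congr1 (fun q : {poly F} => q`_(s - i))%R D0.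
  have i_le : (i <= s)%N by rewrite -ltnS.
  by rewrite coef_poly coef0 ltnS leq_subr subKn // inord_val.
have [i hi] := BL_window_neq0 D_neq0.
suff -> : pact D blcoef i = 0%R by rewrite eqxx.
have sizeD : (size D <= s.+1)%N by apply: size_poly.
have r_lt : (Z.to_nat i - 1 < m)%N by move: hi; move: (size D) sizeD => a ha; lia.
have := congr1 (fun M : 'M[F]_(m, 1) => M (Ordinal r_lt) ord0) Md0; rewrite !mxE => <-.
rewrite (@pact_widen _ _ _ _ s.+1 sizeD) zsum_ord (reindex_inj rev_ord_inj) /=.
apply: eq_bigr => j _; rewrite !mxE mulrC /zcoef (_ : Z.leb 0 _ = true); last first.
  by apply/Z.leb_le; lia.
rewrite Nat2Z.id coef_poly (_ : (s.+1 - j.+1 < s.+1)%N); last lia.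
rewrite (_ : s - (s.+1 - j.+1) = j)%N ?inord_val; last by have := ltn_ord j; lia.
by congr (blcoef _ * _)%R; rewrite /=; have := ltn_ord j; lia.
Qed.

Variable x : nat -> R.
Hypothesis x_kronecker : forall n, kronecker_point (lmulL (polyL B) L) n (x n).

Lemma kdigit_lt n i : (kdigit n i < p)%coq_nat.
Proof. exact/ltP/(digit_lt p_prime). Qed.

Lemma kronecker_unit n : Rle 0 (x n) /\ Rlt (x n) 1.
Proof.
have [i0 _ /ltP not_max] := kdigit_not_max n 0.
exact (digit_expansion_unit (leP (prime_gt1 p_prime)) (kdigit_lt n) not_max (x_kronecker n)).
Qed.

Lemma inRbox_kronecker n s a :
  inRbox (Rdiv (INR a) (pow (INR p) s)) (x n) (Rdiv (INR a.+1) (pow (INR p) s)) =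
  (row_value (kdigitsv n s) == a).
Proof.
have [i0 /leP si0 /ltP not_max] := kdigit_not_max n s.
have := digit_expansion_box (leP (prime_gt1 p_prime)) (kdigit_lt n) si0 not_max.
move=> /(_ (x n) (x_kronecker n)) box.
rewrite (inRbox_scaled a _ box) ?digit_prefix_kdigit; last first.
  by apply: pow_lt; apply: (lt_INR 0); apply/ltP; apply: prime_gt0.
by case: Nat.eqb_spec => [->|/eqP/negbTE ->]; rewrite ?eqxx.
Qed.

Lemma kronecker_box_count k m s a :
  (s + (size B).-1 + K <= m + 1)%N -> (a < p ^ s)%N ->
  (\sum_(j < p ^ m) (if inRbox (Rdiv (INR a) (pow (INR p) s)) (x (k * p ^ m + j))
                        (Rdiv (INR a.+1) (pow (INR p) s)) then 1 else 0))%N = (p ^ (m - s))%N.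
Proof.
move=> sm a_lt; set M := hankel m s; set c := kshift k m s; set w := digitsv p s a.
have K_gt0 : (0 < K)%N := leq_trans (next_deg_gt0 cf_deg_gt0 0) (next_deg_le cf_deg_le 0).
have sm' : (s <= m)%N by lia.
transitivity #|[set v : 'rV[F]_m | (v *m M + c == w)%R]|.
  rewrite -sum1_card [RHS]big_mkcond (reindex _ (onW_bij _ (digitsv_bij p_prime m))) /=.
  apply: eq_bigr => j _; rewrite inRbox_kronecker row_value_eq // kdigitsv_affine //.
  by rewrite inE.
have := card_affine_fiber c w (tr_inj_row_full (hankel_tr_inj sm)); rewrite card_Fp //.
have -> : (p ^ m = p ^ (m - s) * p ^ s)%N by rewrite -expnD subnK.
by move=> /eqP; rewrite eqn_pmul2r ?expn_gt0 ?prime_gt0 // => /eqP.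
Qed.

End KroneckerNet.

Theorem proposition1 (p : nat) (hp : prime p) (L : laurent p)
  (A : nat -> {poly 'F_p}) (K : nat) (B : {poly 'F_p}) (x : nat -> R) :
  irrational L ->
  is_cf_expansion L A ->
  (forall d, (0 < d)%N -> ((size (A d)).-1 <= K)%N) ->
  (exists d, (0 < d)%N /\ (size (A d)).-1 = K) ->
  B != 0%R ->
  (forall n, kronecker_point (lmulL (polyL B) L) n (x n)) ->
  is_t_sequence p (K + (size B).-1 - 1) x.
Proof.
move=> _ [Ls [cf_start cf_rec]] cf_deg_le _ B_neq0 x_kronecker.
have cf_polypart n := (cf_rec n).1.
have cf_deg_gt0 n := (cf_rec n).2.1.
have cf_inverse n := (cf_rec n).2.2.
have unit := kronecker_unit hp cf_start cf_polypart cf_deg_gt0 cf_inverse cf_deg_le B_neq0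
  x_kronecker.
have count := kronecker_box_count hp cf_start cf_polypart cf_deg_gt0 cf_inverse cf_deg_le
  B_neq0 x_kronecker.
split=> // m k t_lt; split=> [|a a_lt]; first lia.
by rewrite count ?subKn //; move: t_lt; move: (size B).-1 => e; lia.
Qed.
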